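(* There exists a universal constant $c_1>0$ such that for all integers $a\ge1$ and $i\ge1$, \[ e^{-c_1(2a)^{-2i/3}}\le g_{a,i}\le e^{c_1(2a)^{-2i/3}}. \] Consequently, $e^{-(c_1/4)/a^2}\le g_{a,i}\le e^{(c_1/4)/a^2}$ for all $a,i\ge1$.
   Context: For integers $a,i\ge1$ let $f_{a,i}=\frac1{2i}\sum_{d\mid i,\ d\text{ odd}}\mu(d)(2a)^{i/d}$, where $\mu$ is the Möbius function and the sum is over positive odd divisors $d$ of $i$, and define $g_{a,i}$ by $f_{a,i}=\frac{(2a)^i}{2i}g_{a,i}$. *)

From mathcomp Require Import all_boot all_order all_algebra.
From mathcomp Require Import all_classical all_reals all_analysis.
Import Order.TTheory GRing.Theory Num.Theory.
Local Open Scope ring_scope.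

Definition mobius (n : nat) : int :=
  if (0 < n)%N && all (fun p => logn p n <= 1)%N (primes n)
  then (-1) ^+ size (primes n) else 0.

Definition f_ai {R : realType} (a i : nat) : R :=
  (2 * i%:R)^-1 *
  \sum_(d <- divisors i | odd d) (mobius d)%:~R * ((2 * a)%:R) ^+ (i %/ d).

Definition g_ai {R : realType} (a i : nat) : R :=
  f_ai a i / (((2 * a)%:R) ^+ i / (2 * i%:R)).

From mathcomp Require Import all_boot all_order all_algebra.
From mathcomp Require Import all_classical all_reals all_analysis.
From mathcomp Require Import zify ring lra.
Import Order.TTheory GRing.Theory Num.Theory.

(* Splitting off the divisor d = 1 gives g_{a,i} = 1 + r / X^i with X = 2a,
   where r collects the odd divisors d >= 3 of i.  The exponents i/d of these
   terms are pairwise distinct and at most i/3, so |r| is dominated by the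
   geometric sum 1 + X + ... + X^(i/3) < 2 X^(i/3), whence |g_{a,i} - 1| <= 2t
   with t = X^(-2i/3).  For i < 3 there is no such d and g_{a,i} = 1; for
   i >= 3 we have t <= X^(-2) <= 1/4, a range on which |u| <= 2t forces
   e^(-4t) <= 1 + u <= e^(4t).  Hence c_1 = 4, and the second pair of bounds
   follows from 4t <= 4 X^(-2) = 1/a^2. *)

Lemma sum_expn_lt_double (x m : nat) :
  (1 < x)%N -> (\sum_(0 <= k < m.+1) x ^ k < 2 * x ^ m)%N.
Proof.
move=> x_gt1; elim: m => [|m IHm]; first by rewrite big_nat1.
rewrite big_nat_recr //= expnS.
have : (2 * x ^ m <= x * x ^ m)%N by rewrite leq_mul2r x_gt1 orbT.
lia.
Qed.

Lemma divn_dvd_inj (i d1 d2 : nat) :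
  (0 < i)%N -> d1 %| i -> d2 %| i -> i %/ d1 = i %/ d2 -> d1 = d2.
Proof.
move=> i_gt0 /divnK i_eq1 /divnK i_eq2 eq_quo.
have quo_gt0 : (0 < i %/ d1)%N by move: i_eq1; case: (i %/ d1) => //= ?; lia.
by apply/eqP; rewrite -(eqn_pmul2l quo_gt0) {2}eq_quo i_eq1 i_eq2.
Qed.

Lemma sum_expn_div_odd_divisors_le (x i : nat) : (0 < i)%N -> (1 < x)%N ->
  (\sum_(d <- [seq d <- divisors i | odd d] | d != 1%N) x ^ (i %/ d)
     <= 2 * x ^ (i %/ 3))%N.
Proof.
move=> i_gt0 x_gt1.
rewrite -big_filter -(big_map (fun d => i %/ d) xpredT (fun k => x ^ k)).
apply: (leq_trans _ (ltnW (sum_expn_lt_double x (i %/ 3) x_gt1))).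
apply: (uniq_sub_le_big (op := addn) (le := leq)) => //.
- by move=> m n; apply: leq_addr.
- rewrite map_inj_in_uniq; first by rewrite !filter_uniq // divisors_uniq.
  move=> d1 d2; rewrite !mem_filter -!dvdn_divisors //.
  by move=> /and3P[_ _ dvd1] /and3P[_ _ dvd2]; apply: divn_dvd_inj.
- exact: iota_uniq.
move=> k /mapP[d]; rewrite !mem_filter -dvdn_divisors // => /and3P[d_neq1 d_odd d_dvd] ->.
rewrite mem_iota /= add0n ltnS leq_div2l //.
by case: d d_neq1 d_odd d_dvd => [|[|[|d]]].
Qed.

Local Open Scope ring_scope.

Lemma norm_mobius_le1 {R : realType} (d : nat) : `|(mobius d)%:~R : R| <= 1.
Proof.
rewrite /mobius; case: ifP => _; last by rewrite normr0.
by rewrite rmorphXn /= rmorphN1 normrX normrN1 expr1n.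
Qed.

Definition odd_divisor_tail {R : realType} (a i : nat) : R :=
  \sum_(d <- [seq d <- divisors i | odd d] | d != 1%N)
     (mobius d)%:~R * ((2 * a)%:R) ^+ (i %/ d).

Lemma g_ai_split {R : realType} (a i : nat) : (0 < a)%N -> (0 < i)%N ->
  g_ai a i = 1 + (odd_divisor_tail a i : R) / ((2 * a)%:R) ^+ i.
Proof.
move=> a_gt0 i_gt0.
have X_neq0 : ((2 * a)%:R : R) ^+ i != 0 by rewrite expf_neq0 // pnatr_eq0; lia.
have i_neq0 : (i%:R : R) != 0 by rewrite pnatr_eq0; lia.
rewrite /g_ai /f_ai -big_filter (bigD1_seq 1%N) /=; last 2 first.
- by rewrite mem_filter divisor1.
- by rewrite filter_uniq // divisors_uniq.
by rewrite divn1 /odd_divisor_tail; field; rewrite X_neq0 i_neq0.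
Qed.

Lemma odd_divisor_tail_small {R : realType} (a i : nat) :
  (0 < i)%N -> (i < 3)%N -> odd_divisor_tail a i = 0 :> R.
Proof.
move=> i_gt0 i_lt3; rewrite /odd_divisor_tail big_seq_cond big1 // => d.
rewrite mem_filter -dvdn_divisors // => /andP[/andP[d_odd d_dvd] d_neq1].
have := dvdn_leq i_gt0 d_dvd.
by case: d d_odd d_dvd d_neq1 => [|[|[|d]]] //; lia.
Qed.

Lemma norm_odd_divisor_tail_le {R : realType} (a i : nat) :
  (0 < a)%N -> (0 < i)%N ->
  `|odd_divisor_tail a i : R| <= 2 * ((2 * a)%:R) ^+ (i %/ 3).
Proof.
move=> a_gt0 i_gt0.
rewrite -natrX -natrM; apply: le_trans (ler_norm_sum _ _ _) _.
apply: le_trans (_ : _ <= (\sum_(d <- [seq d <- divisors i | odd d] | d != 1%N)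
   (2 * a) ^ (i %/ d))%N%:R) _.
  rewrite natr_sum; apply: ler_sum => d _.
  rewrite normrM natrX normrX normr_nat -[X in _ <= X]mul1r ler_wpM2r //.
  exact: norm_mobius_le1.
by rewrite ler_nat sum_expn_div_odd_divisors_le //; lia.
Qed.

Lemma expr_div3_divr_le_powR {R : realType} (x : R) (i : nat) : 1 <= x ->
  x ^+ (i %/ 3) / x ^+ i <= x `^ (- ((2 * i)%:R / 3)).
Proof.
move=> x_ge1; have x_ge0 : 0 <= x by lra.
rewrite -!(powR_mulrn _ x_ge0) -powRB; last first.
  by apply/implyP => _; rewrite gt_eqF // (lt_le_trans ltr01 x_ge1).
apply: ler_powR => //.
have : ((i %/ 3) * 3 <= i)%N := leq_divM i 3.
rewrite -(ler_nat R) !natrM; lra.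
Qed.

Lemma powR_le_exprVn2 {R : realType} (x : R) (i : nat) : 1 <= x -> (3 <= i)%N ->
  x `^ (- ((2 * i)%:R / 3)) <= x ^- 2.
Proof.
move=> x_ge1 i_ge3.
rewrite -powR_mulrn ?(le_trans _ x_ge1) // -powRN.
apply: ler_powR => //.
move: i_ge3; rewrite -(ler_nat R) natrM; lra.
Qed.

Lemma expRN_le1_le_expR {R : realType} (y : R) : 0 <= y ->
  expR (- y) <= 1 /\ 1 <= expR y.
Proof. by move=> y_ge0; rewrite expR_le1 oppr_le0 -expR0 ler_expR. Qed.

Lemma expR_bracket {R : realType} (s u : R) : 0 <= s -> s <= 1 / 4 ->
  `|u| <= 2 * s -> expR (- (4 * s)) <= 1 + u /\ 1 + u <= expR (4 * s).
Proof.
move=> s_ge0 s_le; rewrite ler_norml => /andP[u_ge u_le].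
have expR_ge := expR_ge1Dx (4 * s).
have expR_gt := expR_gt0 (4 * s).
split; last by lra.
have expR_mul_ge1 : 1 <= (1 - 2 * s) * expR (4 * s).
  (* (1 - 2s)(1 + 4s) = 1 + 2s(1 - 4s) *)
  apply: le_trans (_ : _ <= (1 - 2 * s) * (1 + 4 * s)) _; first by nra.
  by rewrite ler_wpM2l //; lra.
rewrite expRN -[_^-1]mul1r ler_pdivrMr //.
by apply: le_trans expR_mul_ge1 _; rewrite ler_wpM2r //; lra.
Qed.

Lemma norm_g_ai_sub1_le {R : realType} (a i : nat) : (0 < a)%N -> (0 < i)%N ->
  `|g_ai a i - 1 : R| <= 2 * ((2 * a)%:R) `^ (- ((2 * i)%:R / 3)).
Proof.
move=> a_gt0 i_gt0.
have X_ge1 : (1 : R) <= (2 * a)%:R by rewrite ler1n; lia.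
have Xi_gt0 : (0 : R) < ((2 * a)%:R) ^+ i by apply: exprn_gt0; lra.
rewrite g_ai_split // addrC addKr normrM normfV (gtr0_norm Xi_gt0).
apply: le_trans (_ : _ <= 2 * ((2 * a)%:R ^+ (i %/ 3) / (2 * a)%:R ^+ i)) _.
  by rewrite mulrA ler_pM2r ?invr_gt0 // norm_odd_divisor_tail_le.
by rewrite ler_pM2l // expr_div3_divr_le_powR.
Qed.

Theorem lemma3p1 (R : realType) :
  exists c1 : R, 0 < c1 /\
    forall a i : nat, (1 <= a)%N -> (1 <= i)%N ->
      (expR (- (c1 * powR ((2 * a)%:R) (- ((2 * i)%:R / 3)))) <= g_ai a i
       /\ g_ai a i <= expR (c1 * powR ((2 * a)%:R) (- ((2 * i)%:R / 3))))
      /\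
      (expR (- ((c1 / 4) / (a%:R ^+ 2))) <= g_ai a i
       /\ g_ai a i <= expR ((c1 / 4) / (a%:R ^+ 2))).
Proof.
exists 4; split => // a i a_gt0 i_gt0.
set X : R := (2 * a)%:R; set t := X `^ _.
have X_ge2 : 2 <= X by rewrite /X natrM ler_pMr // ler1n.
have t_ge0 : 0 <= t := powR_ge0 _ _.
have -> : (4 : R) / 4 / a%:R ^+ 2 = 4 * X ^- 2.
  by rewrite /X natrM exprMn invfM; field; rewrite pnatr_eq0 -lt0n.
have [i_lt3 | i_ge3] := ltnP i 3.
  rewrite g_ai_split // odd_divisor_tail_small // mul0r addr0.
  have X_gt0 : 0 < X by lra.
  by split; apply: expRN_le1_le_expR; rewrite mulr_ge0 // invr_ge0 exprn_ge0 // ltW.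
have t_le : t <= X ^- 2 by apply: powR_le_exprVn2 => //; lra.
have X2_le : X ^- 2 <= 1 / 4.
  by rewrite mul1r lef_pV2 ?posrE ?exprn_gt0 //; [nra | lra].
have [g_lo g_hi] := expR_bracket _ _ t_ge0 (le_trans t_le X2_le)
  (norm_g_ai_sub1_le _ _ a_gt0 i_gt0).
rewrite addrC subrK in g_lo g_hi.
have lo_mono : expR (- (4 * X ^- 2)) <= expR (- (4 * t)).
  by rewrite ler_expR lerN2 ler_pM2l.
have hi_mono : expR (4 * t) <= expR (4 * X ^- 2) by rewrite ler_expR ler_pM2l.
split; first by split.
by split; [exact: le_trans lo_mono g_lo | exact: le_trans g_hi hi_mono].
Qed.
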